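(* Let $H$ be a Hopf algebra (coproduct $\Delta h=h_{(1)}\otimes h_{(2)}$, counit $\epsilon$, antipode $S$) over a field $k$. Then $(H,\Omega^1H)$ has a quantum frame resolution with total space $P=H$, structure quantum group $k$ (so $M=H$), $V=\ker\epsilon\subset H$ with trivial coaction, and $\theta(v)=Sv_{(1)}\otimes v_{(2)}$. The (only possible connection $\omega=0$ and its) covariant derivative and torsion are given, for $\sum h\otimes g\in\Omega^1H$, by the restrictions to $\Omega^1H$ of the linear extensions of \[\nabla(h\otimes g)=1\otimes h\otimes g-hg_{(1)}\otimes Sg_{(2)}\otimes g_{(3)},\qquad T(h\otimes g)=h\otimes g\otimes1-h\otimes1\otimes g+hg_{(1)}\otimes Sg_{(2)}\otimes g_{(3)}.\]
   Context: For a unital algebra $A$, $\Omega^1A=\ker(\mu:A\otimes A\to A)$ with $da=1\otimes a-a\otimes1$, and $\Omega^1A\otimes_A\Omega^1A\subset A^{\otimes3}$, with $d(a\otimes b)=1\otimes a\otimes b-a\otimes1\otimes b+a\otimes b\otimes1$. A quantum frame resolution of $(M,\Omega^1M)$ consists of a quantum principal bundle ($P$ a right comodule algebra over a Hopf algebra $H'$ with invertible antipode, $M$ its coinvariants, $P$ flat over $M$, and $P\otimes_MP\to P\otimes H'$, $p\otimes p'\mapsto pp'^{(1)}\otimes p'^{(2)}$ bijective), a right $H'$-comodule $V$, and an $H'$-comodule map $\theta:V\to\Omega^1P$ with image in $P\Omega^1M$ such that $s_\theta:(P\otimes V)^{H'}\to\Omega^1M$, $\sum p_i\otimes v_i\mapsto\sum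 p_i\theta(v_i)$, is bijective. Given a left strong connection $\omega:H'\to\Omega^1P$ (here only $\omega=0$ is possible since $\ker\epsilon$ of $k$ is $0$), the covariant derivative is $\nabla(w)=1\otimes w-\sum_ip_i\otimes\theta(v_i)-\sum_ip_i{}^{(1)}\omega(p_i{}^{(2)})\theta(v_i)$ for $s_\theta^{-1}(w)=\sum_ip_i\otimes v_i$, and the torsion is $T=d-\nabla$. *)

(* Tensor products of (possibly infinite-dimensional) vector
   spaces are not in the library: they are given as explicit binders together
   with their universal property ([is_tensor]). Elements of tensor products are
   handled through finite lists of pairs (finite sums of pure tensors). *)
From HB Require Import structures.
From mathcomp Require Import all_boot all_order all_algebra.
Set Implicit Arguments. Unset Strict Implicit. Unset Printing Implicit Defensive.
Import Order.TTheory GRing.Theory Num.Theory.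
Local Open Scope ring_scope.

Section Defs.
Variable k : fieldType.

Definition is_lin (U W : lmodType k) (f : U -> W) : Prop :=
  forall (a : k) (x y : U), f (a *: x + y) = a *: f x + f y.

Definition is_bilin (U V W : lmodType k) (f : U -> V -> W) : Prop :=
  (forall u, is_lin (f u)) /\ (forall v, is_lin (fun u => f u v)).

Definition is_tensor (U V T : lmodType k) (t : U -> V -> T) : Prop :=
  is_bilin t /\
  forall (W : lmodType k) (f : U -> V -> W), is_bilin f ->
    exists g : T -> W, [/\ is_lin g, (forall u v, g (t u v) = f u v) &
      forall g' : T -> W, is_lin g' -> (forall u v, g' (t u v) = f u v) ->
        g' =1 g].

Variables (H : algType k) (T2 T3 : lmodType k)
  (t2 : H -> H -> T2) (t3' : T2 -> H -> T3).

Definition t3 (a b c : H) : T3 := t3' (t2 a b) c.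

Definition tsum2 (l : seq (H * H)) : T2 := \sum_(p <- l) t2 p.1 p.2.

(* The coproduct is given by a representation
   [cop h] of Delta h as a finite sum of pure tensors:
   Delta h = tsum2 (cop h) = h_(1) (x) h_(2).  Every Sweedler expression below
   is (bi)linear in the pairs, hence independent of the chosen representation. *)
Record is_hopf (cop : H -> seq (H * H)) (eps : H -> k) (S : H -> H) : Prop := {
  cop_lin : forall (a : k) (x y : H),
    tsum2 (cop (a *: x + y)) = a *: tsum2 (cop x) + tsum2 (cop y);
  cop_mul : forall x y : H, tsum2 (cop (x * y)) =
    \sum_(p <- cop x) \sum_(q <- cop y) t2 (p.1 * q.1) (p.2 * q.2);
  cop_one : tsum2 (cop 1) = t2 1 1;
  coassoc : forall x : H,
    \sum_(p <- cop x) \sum_(q <- cop p.1) t3 q.1 q.2 p.2 =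
    \sum_(p <- cop x) \sum_(q <- cop p.2) t3 p.1 q.1 q.2;
  eps_lin : forall (a : k) (x y : H), eps (a *: x + y) = a * eps x + eps y;
  eps_mul : forall x y : H, eps (x * y) = eps x * eps y;
  eps_one : eps 1 = 1;
  counit_l : forall x : H, \sum_(p <- cop x) eps p.1 *: p.2 = x;
  counit_r : forall x : H, \sum_(p <- cop x) eps p.2 *: p.1 = x;
  S_lin : is_lin S;
  antipode_l : forall x : H, \sum_(p <- cop x) S p.1 * p.2 = (eps x)%:A;
  antipode_r : forall x : H, \sum_(p <- cop x) p.1 * S p.2 = (eps x)%:A
}.

Variables (cop : H -> seq (H * H)) (eps : H -> k) (S : H -> H).

Definition theta (v : H) : T2 := \sum_(x <- cop v) t2 (S x.1) x.2.

(* r = [:: (p_i, v_i)] represents sum_i p_i (x) v_i in P (x) V, V = ker eps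
   (viewed inside H (x) H) *)
Definition inPV (r : seq (H * H)) : bool := all (fun z => eps z.2 == 0) r.

Definition s_theta (r : seq (H * H)) : T2 :=
  \sum_(z <- r) \sum_(x <- cop z.2) t2 (z.1 * S x.1) x.2.

Definition one_tens (l : seq (H * H)) : T3 := \sum_(z <- l) t3 1 z.1 z.2.

Definition p_tens_theta (r : seq (H * H)) : T3 :=
  \sum_(z <- r) \sum_(x <- cop z.2) t3 z.1 (S x.1) x.2.

(* nabla(w) = 1 (x) w - sum_i p_i (x) theta(v_i)  (omega = 0),
   where w = tsum2 l and s_theta^{-1}(w) is represented by r *)
Definition nabla_def (l r : seq (H * H)) : T3 := one_tens l - p_tens_theta r.

Definition d1 (l : seq (H * H)) : T3 :=
  \sum_(z <- l) (t3 1 z.1 z.2 - t3 z.1 1 z.2 + t3 z.1 z.2 1).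

Definition sw3 (h g : H) : T3 :=
  \sum_(x <- cop g) \sum_(y <- cop x.2) t3 (h * x.1) (S y.1) y.2.

Definition nabla_formula (l : seq (H * H)) : T3 :=
  \sum_(z <- l) (t3 1 z.1 z.2 - sw3 z.1 z.2).
Definition torsion_formula (l : seq (H * H)) : T3 :=
  \sum_(z <- l) (t3 z.1 z.2 1 - t3 z.1 1 z.2 + sw3 z.1 z.2).

End Defs.

(* The bundle is trivial: the canonical map h (x) g |-> h g_(1) (x) g_(2) of
   H (x) H is invertible, with inverse h (x) g |-> h S g_(1) (x) g_(2)
   (coassociativity, counit and antipode axioms).  s_theta is this inverse
   restricted to H (x) ker eps, hence injective, and it lands in Omega^1 H
   since mu (h S g_(1) (x) g_(2)) = eps(g) h.  For w in Omega^1 H, the canonical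
   image sum h g_(1) (x) g_(2) can have its second legs projected onto ker eps at
   the cost of sum h g (x) 1 = mu(w) (x) 1 = 0, which gives surjectivity.
   Finally sum_i p_i (x) theta(v_i) is (id (x) theta) of the canonical image of
   w = s_theta(sum_i p_i (x) v_i), which is the stated formula for nabla, and
   T = d - nabla follows. *)

From Pilot Require Import Defs.
From HB Require Import structures.
From mathcomp Require Import all_boot all_algebra.
From Stdlib Require Import ClassicalEpsilon.

Set Implicit Arguments. Unset Strict Implicit. Unset Printing Implicit Defensive.
Import GRing.Theory.
Local Open Scope ring_scope.

Section IsLinTheory.
Variables (k : fieldType) (U W : lmodType k) (g : U -> W).
Hypothesis g_lin : is_lin g.

HB.instance Definition _ := GRing.isLinear.Build k U W *:%R g g_lin.

Lemma is_lin0 : g 0 = 0. Proof. exact: linear0. Qed.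
Lemma is_linD x y : g (x + y) = g x + g y. Proof. exact: linearD. Qed.
Lemma is_linZ a x : g (a *: x) = a *: g x. Proof. exact: linearZ. Qed.
Lemma is_linB x y : g (x - y) = g x - g y. Proof. exact: linearB. Qed.
Lemma is_lin_sum (I : Type) (r : seq I) (F : I -> U) :
  g (\sum_(i <- r) F i) = \sum_(i <- r) g (F i).
Proof. exact: linear_sum. Qed.

End IsLinTheory.

Lemma is_lin_sumf (k : fieldType) (U W : lmodType k) (I : Type) (r : seq I)
    (F : I -> U -> W) :
  (forall i, is_lin (F i)) -> is_lin (fun u => \sum_(i <- r) F i u).
Proof.
move=> F_lin a x y; rewrite scaler_sumr -big_split.
by apply: eq_bigr => i _; rewrite F_lin.
Qed.

Definition is_trilin (k : fieldType) (U V X W : lmodType k)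
    (f : U -> V -> X -> W) : Prop :=
  [/\ forall v x, is_lin (fun u => f u v x), forall u x, is_lin (fun v => f u v x)
    & forall u v, is_lin (f u v)].

Section TensorProduct.
Variables (k : fieldType) (U V T : lmodType k) (t : U -> V -> T).
Hypothesis t_tensor : is_tensor t.

Lemma is_tensor_ext (W : lmodType k) (g1 g2 : T -> W) :
  is_lin g1 -> is_lin g2 -> (forall u v, g1 (t u v) = g2 (t u v)) -> g1 =1 g2.
Proof.
have [[tr tl] univ] := t_tensor; move=> g1_lin g2_lin e.
have f_bilin : is_bilin (fun u v => g2 (t u v)).
  by split=> [u|v] a x y /=; rewrite ?tr ?tl g2_lin.
have [g [_ _ g_uniq]] := univ W _ f_bilin.
by move=> w; rewrite (g_uniq g1 g1_lin e) (g_uniq g2 g2_lin (fun _ _ => erefl)).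
Qed.

Lemma is_tensor_lift (W : lmodType k) (f : U -> V -> W) :
  is_bilin f -> exists g : T -> W, is_lin g /\ forall u v, g (t u v) = f u v.
Proof.
by move=> f_bilin; have [g [g_lin gE _]] := t_tensor.2 W f f_bilin; exists g.
Qed.

Definition pure_sum (l : seq (U * V)) : T := \sum_(p <- l) t p.1 p.2.

Definition pure_sums : {pred T} := fun w =>
  if excluded_middle_informative (exists l, w = pure_sum l) then true else false.

Lemma pure_sumsP w : reflect (exists l, w = pure_sum l) (w \in pure_sums).
Proof.
by rewrite unfold_in /pure_sums; case: excluded_middle_informative; constructor.
Qed.

Lemma pure_sums_submod_closed : subsemimod_closed pure_sums.
Proof.
have [[tr tl] _] := t_tensor.
split; [split|].
- by apply/pure_sumsP; exists [::]; rewrite /pure_sum big_nil.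
- move=> _ _ /pure_sumsP[l1 ->] /pure_sumsP[l2 ->]; apply/pure_sumsP.
  by exists (l1 ++ l2); rewrite /pure_sum big_cat.
- move=> a _ /pure_sumsP[l ->]; apply/pure_sumsP.
  exists [seq (a *: p.1, p.2) | p <- l]; rewrite /pure_sum big_map scaler_sumr.
  by apply: eq_bigr => p _; rewrite (is_linZ (tl _)).
Qed.

HB.instance Definition _ :=
  GRing.isSubmodClosed.Build k T pure_sums pure_sums_submod_closed.
Definition pure_span := {w : T | w \in pure_sums}.
HB.instance Definition _ :=
  [isSub of pure_span for (@sval T (fun w => w \in pure_sums))].
HB.instance Definition _ := [Choice of pure_span by <:].
HB.instance Definition _ := [SubChoice_isSubZmodule of pure_span by <:].
HB.instance Definition _ := [SubZmodule_isSubLmodule of pure_span by <:].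

(* The span of the pure tensors satisfies the universal property, hence is
   everything. *)
Lemma is_tensor_pure_sum w : exists l, w = pure_sum l.
Proof.
have [[tr tl] _] := t_tensor.
have t_pure u v : t u v \in pure_sums.
  by apply/pure_sumsP; exists [:: (u, v)]; rewrite /pure_sum big_seq1.
pose tS u v : pure_span := Sub (t u v) (t_pure u v).
have tS_bilin : is_bilin tS.
  by split=> [u|v] a x y; apply: val_inj; rewrite raddfD /= ?tr ?tl.
have [g [g_lin gE]] := is_tensor_lift tS_bilin.
have val_g : (fun w => val (g w)) =1 id.
  apply: is_tensor_ext => [a x y | | u v]; last by rewrite gE.
  - by rewrite g_lin raddfD.
  - by [].
by apply/pure_sumsP; rewrite -[w]val_g (valP (g w)).
Qed.

End TensorProduct.

Lemma is_tensor_lift3 (k : fieldType) (U V X T T' W : lmodType k)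
    (t : U -> V -> T) (t' : T -> X -> T') (f : U -> V -> X -> W) :
  is_tensor t -> is_tensor t' -> is_trilin f ->
  exists g : T' -> W, is_lin g /\ forall u v x, g (t' (t u v) x) = f u v x.
Proof.
move=> t_tensor t'_tensor [f_lin1 f_lin2 f_lin3].
have lift_at x : {g : T -> W | is_lin g /\ forall u v, g (t u v) = f u v x}.
  apply: constructive_indefinite_description; apply: (is_tensor_lift t_tensor).
  by split=> [u|v]; [exact: f_lin2 | exact: f_lin1].
pose F w x := sval (lift_at x) w.
have F_lin x : is_lin (F ^~ x) by have [] := svalP (lift_at x).
have FE u v x : F (t u v) x = f u v x by have [_] := svalP (lift_at x); apply.
have F_bilin : is_bilin F.
  split=> [w a x1 x2 | x]; last exact: F_lin.
  move: w; apply: (is_tensor_ext t_tensor) => [b w1 w2 | b w1 w2 | u v].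
  - exact: F_lin.
  - rewrite !(is_linD (F_lin _)) !(is_linZ (F_lin _)).
    by rewrite !scalerDr !scalerA [b * a]mulrC addrACA.
  - by rewrite !FE f_lin3.
have [g [g_lin gE]] := is_tensor_lift t'_tensor F_bilin.
by exists g; split=> // u v x; rewrite gE FE.
Qed.

Section HopfAlgebra.
Variables (k : fieldType) (H : algType k) (T2 T3 : lmodType k)
  (t2 : H -> H -> T2) (t3' : T2 -> H -> T3)
  (cop : H -> seq (H * H)) (eps : H -> k) (S : H -> H).
Hypotheses (t2_tensor : is_tensor t2) (t3_tensor : is_tensor t3')
  (hopf : is_hopf t2 t3' cop eps S).
Local Notation t3 := (t3 t2 t3').
Local Notation tsum2 := (tsum2 t2).

Let t2_linl b : is_lin (t2^~ b) := t2_tensor.1.2 b.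
Let t2_linr a : is_lin (t2 a) := t2_tensor.1.1 a.

Lemma t2Dl x y b : t2 (x + y) b = t2 x b + t2 y b. Proof. exact: (is_linD (t2_linl b)). Qed.
Lemma t2Zl c x b : t2 (c *: x) b = c *: t2 x b. Proof. exact: (is_linZ (t2_linl b)). Qed.
Lemma t2Dr a x y : t2 a (x + y) = t2 a x + t2 a y. Proof. exact: (is_linD (t2_linr a)). Qed.
Lemma t2Zr c a x : t2 a (c *: x) = c *: t2 a x. Proof. exact: (is_linZ (t2_linr a)). Qed.
Lemma t2Br a x y : t2 a (x - y) = t2 a x - t2 a y. Proof. exact: (is_linB (t2_linr a)). Qed.
Lemma t2_suml I (r : seq I) (F : I -> H) b :
  t2 (\sum_(i <- r) F i) b = \sum_(i <- r) t2 (F i) b.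
Proof. exact: (is_lin_sum (t2_linl b)). Qed.

Let t3'_linl c : is_lin (t3'^~ c) := t3_tensor.1.2 c.

Lemma t3D1 x y b c : t3 (x + y) b c = t3 x b c + t3 y b c.
Proof. by rewrite /t3 t2Dl (is_linD (t3'_linl c)). Qed.
Lemma t3Z1 s x b c : t3 (s *: x) b c = s *: t3 x b c.
Proof. by rewrite /t3 t2Zl (is_linZ (t3'_linl c)). Qed.
Lemma t3D2 a x y c : t3 a (x + y) c = t3 a x c + t3 a y c.
Proof. by rewrite /t3 t2Dr (is_linD (t3'_linl c)). Qed.
Lemma t3Z2 s a x c : t3 a (s *: x) c = s *: t3 a x c.
Proof. by rewrite /t3 t2Zr (is_linZ (t3'_linl c)). Qed.
Lemma t3D3 a b x y : t3 a b (x + y) = t3 a b x + t3 a b y.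
Proof. exact: (is_linD (t3_tensor.1.1 _)). Qed.
Lemma t3Z3 s a b x : t3 a b (s *: x) = s *: t3 a b x.
Proof. exact: (is_linZ (t3_tensor.1.1 _)). Qed.
Lemma SD x y : S (x + y) = S x + S y. Proof. exact: (is_linD (S_lin hopf)). Qed.
Lemma SZ c x : S (c *: x) = c *: S x. Proof. exact: (is_linZ (S_lin hopf)). Qed.

Ltac solve_lin :=
  let c := fresh "c" in let x := fresh "x" in let y := fresh "y" in
  move=> c x y /=;
  by rewrite ?(SD, SZ, mulrDl, mulrDr) -?scalerAr -?scalerAl
    ?(t2Dl, t2Zl, t2Dr, t2Zr, t3D1, t3Z1, t3D2, t3Z2, t3D3, t3Z3).

Lemma sweedler_lin (W : lmodType k) (f : H -> H -> W) :
  is_bilin f -> is_lin (fun v => \sum_(p <- cop v) f p.1 p.2).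
Proof.
move=> f_bilin; have [g [g_lin gE]] := is_tensor_lift t2_tensor f_bilin.
have sweedlerE v : \sum_(p <- cop v) f p.1 p.2 = g (tsum2 (cop v)).
  by rewrite (is_lin_sum g_lin); apply: eq_bigr => p _; rewrite gE.
by move=> a x y; rewrite !sweedlerE (cop_lin hopf) g_lin.
Qed.

Lemma coassoc_trilin (W : lmodType k) (f : H -> H -> H -> W) : is_trilin f ->
  forall x, \sum_(p <- cop x) \sum_(q <- cop p.1) f q.1 q.2 p.2 =
            \sum_(p <- cop x) \sum_(q <- cop p.2) f p.1 q.1 q.2.
Proof.
move=> f_trilin x.
have [g [g_lin gE]] := is_tensor_lift3 t2_tensor t3_tensor f_trilin.
transitivity (g (\sum_(p <- cop x) \sum_(q <- cop p.1) t3 q.1 q.2 p.2)).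
  rewrite (is_lin_sum g_lin); apply: eq_bigr => p _.
  by rewrite (is_lin_sum g_lin); apply: eq_bigr => q _; rewrite gE.
rewrite (coassoc hopf) (is_lin_sum g_lin); apply: eq_bigr => p _.
by rewrite (is_lin_sum g_lin); apply: eq_bigr => q _; rewrite gE.
Qed.

Lemma counit_l_lin (W : lmodType k) (L : H -> W) : is_lin L ->
  forall x, \sum_(p <- cop x) eps p.1 *: L p.2 = L x.
Proof.
move=> L_lin x; rewrite -[in RHS](counit_l hopf x) (is_lin_sum L_lin).
by apply: eq_bigr => p _; rewrite (is_linZ L_lin).
Qed.

Lemma counit_r_lin (W : lmodType k) (L : H -> W) : is_lin L ->
  forall x, \sum_(p <- cop x) eps p.2 *: L p.1 = L x.
Proof.
move=> L_lin x; rewrite -[in RHS](counit_r hopf x) (is_lin_sum L_lin).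
by apply: eq_bigr => p _; rewrite (is_linZ L_lin).
Qed.

Definition galois_map (h g : H) : T2 := \sum_(x <- cop g) t2 (h * x.1) x.2.
Definition galois_inv (h g : H) : T2 := \sum_(x <- cop g) t2 (h * S x.1) x.2.

Lemma galois_map_bilin : is_bilin galois_map.
Proof.
split=> [h | g].
  by apply: (sweedler_lin (f := fun a b => t2 (h * a) b)); split=> ?; solve_lin.
by apply: is_lin_sumf => x; solve_lin.
Qed.

Lemma galois_inv_bilin : is_bilin galois_inv.
Proof.
split=> [h | g].
  by apply: (sweedler_lin (f := fun a b => t2 (h * S a) b)); split=> ?; solve_lin.
by apply: is_lin_sumf => x; solve_lin.
Qed.

Lemma galois_map_inv h v :
  \sum_(x <- cop v) galois_map (h * S x.1) x.2 = t2 h v.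
Proof.
rewrite /galois_map.
rewrite -(coassoc_trilin (f := fun a b c => t2 (h * S a * b) c)); last first.
  by split=> ? ?; solve_lin.
rewrite -(counit_l_lin (t2_linr h)); apply: eq_bigr => x _.
rewrite -t2Zl -mulr_algr -(antipode_l hopf) mulr_sumr t2_suml.
by apply: eq_bigr => q _; rewrite mulrA.
Qed.

Lemma galois_inv_map h v :
  \sum_(x <- cop v) galois_inv (h * x.1) x.2 = t2 h v.
Proof.
rewrite /galois_inv.
rewrite -(coassoc_trilin (f := fun a b c => t2 (h * a * S b) c)); last first.
  by split=> ? ?; solve_lin.
rewrite -(counit_l_lin (t2_linr h)); apply: eq_bigr => x _.
rewrite -t2Zl -mulr_algr -(antipode_r hopf) mulr_sumr t2_suml.
by apply: eq_bigr => q _; rewrite mulrA.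
Qed.

Lemma theta_lin : is_lin (theta t2 cop S).
Proof. by apply: (sweedler_lin (f := fun a b => t2 (S a) b)); split=> ?; solve_lin. Qed.

Lemma theta_galois_inv v : theta t2 cop S v = galois_inv 1 v.
Proof. by apply: eq_bigr => x _; rewrite mul1r. Qed.

Lemma s_thetaE r : s_theta t2 cop S r = \sum_(z <- r) galois_inv z.1 z.2.
Proof. by []. Qed.

Lemma eps_sub_unit g : eps (g - (eps g)%:A) = 0.
Proof.
by rewrite addrC -scaleNr (eps_lin hopf) (eps_one hopf) mulr1 addNr.
Qed.

Section Multiplication.
Variable mu : T2 -> H.
Hypotheses (mu_lin : is_lin mu) (mu_t2 : forall a b, mu (t2 a b) = a * b).

Lemma mu_tsum2 l : mu (tsum2 l) = \sum_(z <- l) z.1 * z.2.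
Proof. by rewrite (is_lin_sum mu_lin); apply: eq_bigr => z _; rewrite mu_t2. Qed.

Lemma mu_galois_inv h g : mu (galois_inv h g) = eps g *: h.
Proof.
rewrite (is_lin_sum mu_lin) -mulr_algr -(antipode_l hopf) mulr_sumr.
by apply: eq_bigr => x _; rewrite mu_t2 mulrA.
Qed.

Lemma mu_theta v : mu (theta t2 cop S v) = (eps v)%:A.
Proof. by rewrite theta_galois_inv mu_galois_inv. Qed.

Lemma mu_s_theta r : inPV eps r -> mu (s_theta t2 cop S r) = 0.
Proof.
move=> /allP r_PV; rewrite s_thetaE (is_lin_sum mu_lin) big1_seq // => z /andP[_ z_r].
by rewrite mu_galois_inv (eqP (r_PV z z_r)) scale0r.
Qed.

Definition s_theta_preimage (l : seq (H * H)) : seq (H * H) :=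
  [seq (z.1 * x.1, x.2 - (eps x.2)%:A) | z <- l, x <- cop z.2].

Lemma s_theta_preimage_PV l : inPV eps (s_theta_preimage l).
Proof. by apply/allP => _ /allpairsPdep[z [x [_ _ ->]]]; rewrite /= eps_sub_unit. Qed.

Lemma tsum2_s_theta_preimage l :
  tsum2 (s_theta_preimage l) =
  \sum_(z <- l) galois_map z.1 z.2 - t2 (mu (tsum2 l)) 1.
Proof.
rewrite /Defs.tsum2 big_allpairs_dep mu_tsum2 t2_suml -sumrB.
apply: eq_bigr => z _ /=.
rewrite -(counit_r_lin (L := fun m => t2 (z.1 * m) 1)); last by solve_lin.
by rewrite -sumrB; apply: eq_bigr => x _; rewrite t2Br t2Zr.
Qed.

Lemma s_theta_preimageK l :
  mu (tsum2 l) = 0 -> s_theta t2 cop S (s_theta_preimage l) = tsum2 l.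
Proof.
move=> l_ker.
have [Psi [Psi_lin PsiE]] := is_tensor_lift t2_tensor galois_inv_bilin.
have Psi_tsum2 r : Psi (tsum2 r) = s_theta t2 cop S r.
  by rewrite s_thetaE (is_lin_sum Psi_lin); apply: eq_bigr => z _; rewrite PsiE.
rewrite -Psi_tsum2 tsum2_s_theta_preimage l_ker (is_lin0 (t2_linl 1)) subr0.
rewrite (is_lin_sum Psi_lin); apply: eq_bigr => z _.
rewrite -galois_inv_map (is_lin_sum Psi_lin).
by apply: eq_bigr => x _; rewrite PsiE.
Qed.

Lemma s_theta_surj w : mu w = 0 -> exists2 r, inPV eps r & s_theta t2 cop S r = w.
Proof.
have [l ->] := is_tensor_pure_sum t2_tensor w; move=> l_ker.
by exists (s_theta_preimage l); [exact: s_theta_preimage_PV | exact: s_theta_preimageK].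
Qed.

End Multiplication.

Section CanonicalMap.
Variable can : T2 -> T2.
Hypotheses (can_lin : is_lin can) (canE : forall h g, can (t2 h g) = galois_map h g).

Lemma can_s_theta r : can (s_theta t2 cop S r) = tsum2 r.
Proof.
rewrite s_thetaE (is_lin_sum can_lin); apply: eq_bigr => z _.
rewrite (is_lin_sum can_lin) -galois_map_inv; apply: eq_bigr => x _.
by rewrite canE.
Qed.

Lemma s_theta_inj r r' :
  s_theta t2 cop S r = s_theta t2 cop S r' -> tsum2 r = tsum2 r'.
Proof. by move=> e; rewrite -!can_s_theta e. Qed.

Lemma p_tens_theta_sw3 l r : s_theta t2 cop S r = tsum2 l ->
  p_tens_theta t2 t3' cop S r = \sum_(z <- l) sw3 t2 t3' cop S z.1 z.2.
Proof.
move=> e.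
have id_theta_bilin : is_bilin (fun a b => \sum_(x <- cop b) t3 a (S x.1) x.2).
  split=> [a | b]; last by apply: is_lin_sumf => x; solve_lin.
  by apply: (sweedler_lin (f := fun c d => t3 a (S c) d)); split=> ?; solve_lin.
have [Th [Th_lin ThE]] := is_tensor_lift t2_tensor id_theta_bilin.
have Th_tsum2 l' :
    Th (tsum2 l') = \sum_(z <- l') \sum_(x <- cop z.2) t3 z.1 (S x.1) x.2.
  by rewrite (is_lin_sum Th_lin); apply: eq_bigr => z _; rewrite ThE.
rewrite /p_tens_theta -Th_tsum2 -can_s_theta e (is_lin_sum can_lin) (is_lin_sum Th_lin).
apply: eq_bigr => z _; rewrite canE (is_lin_sum Th_lin).
by apply: eq_bigr => x _; rewrite ThE.
Qed.

Lemma nabla_defE l r : s_theta t2 cop S r = tsum2 l ->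
  nabla_def t2 t3' cop S l r = nabla_formula t2 t3' cop S l.
Proof. by move=> e; rewrite /nabla_def /nabla_formula sumrB (p_tens_theta_sw3 e). Qed.

End CanonicalMap.

Lemma d1_sub_nabla_formula l :
  d1 t2 t3' l - nabla_formula t2 t3' cop S l = torsion_formula t2 t3' cop S l.
Proof.
rewrite /d1 /nabla_formula /torsion_formula -sumrB; apply: eq_bigr => z _.
rewrite opprB addrC !addrA subrK addrAC [RHS]addrAC; congr (_ - _); exact: addrC.
Qed.

End HopfAlgebra.

Unset Implicit Arguments.

Theorem proposition4p1 (k : fieldType) (H : algType k) (T2 T3 : lmodType k)
  (t2 : H -> H -> T2) (t3' : T2 -> H -> T3)
  (cop : H -> seq (H * H)) (eps : H -> k) (S : H -> H) (mu : T2 -> H) :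
  is_tensor t2 -> is_tensor t3' -> is_hopf t2 t3' cop eps S ->
  (* mu : H (x) H -> H the multiplication; Omega^1 H = ker mu *)
  is_lin mu -> (forall a b : H, mu (t2 a b) = a * b) ->
  [/\
    (* theta : V -> Omega^1 P is linear, with image in P Omega^1 M = Omega^1 H *)
    (forall (a : k) (v v' : H), eps v = 0 -> eps v' = 0 ->
       theta t2 cop S (a *: v + v') =
       a *: theta t2 cop S v + theta t2 cop S v'),
    (forall v : H, eps v = 0 -> mu (theta t2 cop S v) = 0),
    (* s_theta : P (x) V -> Omega^1 M is a bijection *)
    [/\ (forall r, inPV eps r -> mu (s_theta t2 cop S r) = 0),
        (forall r r', inPV eps r -> inPV eps r' ->
           s_theta t2 cop S r = s_theta t2 cop S r' -> tsum2 t2 r = tsum2 t2 r') &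
        (forall w : T2, mu w = 0 ->
           exists2 r, inPV eps r & s_theta t2 cop S r = w)],
    (* covariant derivative *)
    (forall l r, mu (tsum2 t2 l) = 0 -> inPV eps r ->
       s_theta t2 cop S r = tsum2 t2 l ->
       nabla_def t2 t3' cop S l r = nabla_formula t2 t3' cop S l) &
    (* torsion T = d - nabla *)
    (forall l r, mu (tsum2 t2 l) = 0 -> inPV eps r ->
       s_theta t2 cop S r = tsum2 t2 l ->
       d1 t2 t3' l - nabla_def t2 t3' cop S l r = torsion_formula t2 t3' cop S l)].
Proof.
move=> t2_tensor t3_tensor hopf mu_lin mu_t2.
have [can [can_lin canE]] := is_tensor_lift t2_tensor (galois_map_bilin t2_tensor hopf).
have nablaE := nabla_defE t2_tensor t3_tensor hopf can_lin canE.
split.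
- by move=> a v v' _ _; apply: (theta_lin t2_tensor hopf).
- by move=> v eps_v; rewrite (mu_theta hopf mu_lin mu_t2) eps_v scale0r.
- split.
  + exact: (mu_s_theta hopf mu_lin mu_t2).
  + by move=> r r' _ _; apply: (s_theta_inj t2_tensor t3_tensor hopf can_lin canE).
  + exact: (s_theta_surj t2_tensor t3_tensor hopf mu_lin mu_t2).
- by move=> l r _ _; apply: nablaE.
- by move=> l r _ _ e; rewrite nablaE // d1_sub_nabla_formula.
Qed.
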